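(* If $x_R=\infty$, then $\alpha(\bar G)\le\alpha(\overline F)+1$ and $\beta(\bar G)\ge\beta(\overline F)+1$. If $x_R<\infty$, then $\alpha(\bar G(x_R-(\cdot)^{-1}))\le\alpha(\overline F(x_R-(\cdot)^{-1}))-1$ and $\beta(\bar G(x_R-(\cdot)^{-1}))\ge\beta(\overline F(x_R-(\cdot)^{-1}))-1$.
   Context: $F$ is a c.d.f. with $F(0)=0$, finite mean $\mathbb{E}[B]$, right endpoint $x_R=\sup\{x:F(x)<1\}\le\infty$; $\overline F=1-F$; $G(x)=\int_0^x\overline F(t)dt/\mathbb{E}[B]$, $\bar G=1-G$. For a function $\phi$, $\phi(x_R-(\cdot)^{-1})$ denotes $x\mapsto\phi(x_R-1/x)$. For positive $f$, the upper Matuszewska index $\alpha(f)$ is the infimum of those $\alpha$ for which there is $C$ such that for each $\Lambda>1$, $f(\mu x)/f(x)\le C(1+o(1))\mu^\alpha$ as $x\to\infty$ uniformly in $\mu\in[1,\Lambda]$; the lower index $\beta(f)$ is the supremum of those $\beta$ for which there is $D>0$ with $f(\mu x)/f(x)\ge D(1+o(1))\mu^\beta$ uniformly in $\mu\in[1,\Lambda]$. *)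

From HB Require Import structures.
From mathcomp Require Import all_boot all_order all_algebra.
From mathcomp Require Import all_classical all_reals all_analysis.
Set Implicit Arguments. Unset Strict Implicit. Unset Printing Implicit Defensive.
Import Order.TTheory GRing.Theory Num.Theory.
Import numFieldNormedType.Exports.
Local Open Scope classical_set_scope.
Local Open Scope ring_scope.

Section Defs.
Variable R : realType.

Definition is_cdf (F : R -> R) : Prop :=
  [/\ {homo F : x y / x <= y},
      (forall x, 0 <= F x <= 1),
      (forall x, F y @[y --> x^'+] --> F x),
      (F x @[x --> -oo] --> (0 : R)) &
      (F x @[x --> +oo] --> (1 : R))].

Definition tailF (F : R -> R) (x : R) : R := 1 - F x.

(* E[B] = \int_0^oo \bar F(t) dt  (tail formula, B >= 0 since F(0)=0) *)
Definition meanE (F : R -> R) : \bar R :=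
  (\int[lebesgue_measure]_(t in `[0%R, +oo[%classic) (tailF F t)%:E)%E.

Definition mean (F : R -> R) : R := fine (meanE F).

Definition Gcdf (F : R -> R) (x : R) : R :=
  fine (\int[lebesgue_measure]_(t in `[0%R, x]) (tailF F t)%:E)%E / mean F.

Definition tailG (F : R -> R) (x : R) : R := 1 - Gcdf F x.

Definition right_endpoint (F : R -> R) : \bar R :=
  ereal_sup [set x%:E | x in [set x : R | F x < 1]].

Definition near_endpoint (phi : R -> R) (xR : R) : R -> R :=
  fun x => phi (xR - x^-1).

(* exponents a for which: exists C, forall Lambda > 1,
   f(mu x)/f(x) <= C (1 + o(1)) mu^a as x -> oo uniformly in mu in [1,Lambda] *)
Definition upper_exps (f : R -> R) : set R :=
  [set a | exists C : R, forall Lam : R, 1 < Lam ->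
     forall eps : R, 0 < eps -> exists x0 : R, forall x mu : R,
       x0 <= x -> 1 <= mu <= Lam ->
       f (mu * x) / f x <= C * (1 + eps) * mu `^ a].

Definition lower_exps (f : R -> R) : set R :=
  [set b | exists D : R, 0 < D /\ forall Lam : R, 1 < Lam ->
     forall eps : R, 0 < eps -> exists x0 : R, forall x mu : R,
       x0 <= x -> 1 <= mu <= Lam ->
       D * (1 - eps) * mu `^ b <= f (mu * x) / f x].

Definition upper_index (f : R -> R) : \bar R :=
  ereal_inf [set a%:E | a in upper_exps f].

Definition lower_index (f : R -> R) : \bar R :=
  ereal_sup [set b%:E | b in lower_exps f].

End Defs.

(* For x >= 0 we have Gbar(x) = E[B]^-1 \int_x^oo Fbar, so an affine substitution
   t |-> c + k t turns a pointwise bound Fbar(c + k t) <= K Fbar(t) on ]a, +oo[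
   into Gbar(c + k a) <= k K Gbar(a), and likewise for lower bounds.  With the
   dilation t |-> mu t, every eventual ratio bound Fbar(mu x) <= K Fbar(x) yields
   Gbar(mu x) <= mu K Gbar(x), which shifts the Matuszewska exponents by +1.
   When x_R < oo, the contraction t |-> x_R - (x_R - t)/mu towards x_R sends
   x_R - 1/x to x_R - 1/(mu x) and produces the factor mu^-1 instead; the points
   t >= x_R cause no trouble because Fbar vanishes there. *)

From HB Require Import structures.
From mathcomp Require Import all_boot all_order all_algebra.
From mathcomp Require Import all_classical all_reals all_analysis.
From mathcomp Require Import measurable_realfun ring lra.
Import Order.TTheory GRing.Theory Num.Theory.
Import numFieldNormedType.Exports.
Local Open Scope classical_set_scope.
Local Open Scope ring_scope.

Section affine_change_of_variables.
Context {R : realType}.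
Local Notation mu := (@lebesgue_measure R).
Variables (c k : R).
Hypothesis k_gt0 : 0 < k.

Let aff (t : R) : R := c + k * t.

Let measurable_aff :
  @measurable_fun _ _ (measurableTypeR R) (measurableTypeR R) setT aff.
Proof. by apply: measurable_funD => //; exact: measurable_funM. Qed.

(* [pushforward mu aff] as a measure: the canonical instance takes the
   measurability of [aff] as an argument that inference cannot supply. *)
Let aff_mu := measure_function_pushforward__canonical__measure_function_Measure
  mu measurable_aff.

Let preimage_aff_itv (a b : R) :
  aff @^-1` `]a, b] = `](a - c) / k, (b - c) / k]%classic.
Proof.
by apply/seteqP; split => t /=; rewrite !in_itv /= /aff
  ltr_pdivrMr // ler_pdivlMr // ltrBlDl lerBrDl ![t * k]mulrC.
Qed.

Lemma lebesgue_measure_preimage_affine (A : set R) : measurable A ->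
  (mu (aff @^-1` A) = k^-1%:E * mu A)%E.
Proof.
move=> mA.
have -> : mu A = mscale (NngNum (ltW k_gt0)) aff_mu A.
  apply: lebesgue_measure_unique => // _ /ocitvP[->|[[a b] /= ab ->]].
    by rewrite !measure0.
  rewrite /mscale /= /pushforward preimage_aff_itv !lebesgue_measure_itv /=.
  rewrite !lte_fin ab ltr_pM2r ?invr_gt0 // ltrD2r ab -!EFinD -EFinM.
  by congr (_%:E); field; rewrite gt_eqF.
by rewrite /mscale /= muleA -EFinM mulVf ?gt_eqF // mul1e.
Qed.

Lemma ge0_integral_affine (D : set R) (f : R -> \bar R) : measurable D ->
  measurable_fun [set: R] f -> (forall x, (0 <= f x)%E) ->
  (\int[mu]_(x in aff @^-1` D) f (aff x) = k^-1%:E * \int[mu]_(x in D) f x)%E.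
Proof.
move=> mD mf f_ge0.
rewrite -[LHS]/(\int[mu]_(x in aff @^-1` D) (f \o aff) x)%E.
rewrite -(ge0_integral_pushforward measurable_aff) //; last exact: measurable_funTS.
have kV_ge0 : 0 <= k^-1 by rewrite invr_ge0 ltW.
rewrite (eq_measure_integral (mscale (NngNum kV_ge0) mu)); last first.
  by move=> A mA _; exact: lebesgue_measure_preimage_affine.
by rewrite ge0_integral_mscale //; exact: measurable_funTS.
Qed.

Lemma ge0_integral_itvy_affine a (f : R -> \bar R) :
  measurable_fun [set: R] f -> (forall x, (0 <= f x)%E) ->
  (\int[mu]_(t in `](c + k * a)%R, +oo[) f t =
   k%:E * \int[mu]_(t in `]a, +oo[) f (c + k * t)%R)%E.
Proof.
move=> mf f_ge0.
have -> : `]a, +oo[%classic = aff @^-1` `]c + k * a, +oo[.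
  by apply/seteqP; split => t; rewrite /= !in_itv /= !andbT /aff ltrD2l ltr_pM2l.
by rewrite ge0_integral_affine // muleA -EFinM divff ?gt_eqF // mul1e.
Qed.

End affine_change_of_variables.

Section Matuszewska_index_shift.
Context {R : realType}.
Implicit Types (phi psi : R -> R) (s : R).

Lemma upper_index_le_shift phi psi s :
  (forall a, upper_exps phi a -> upper_exps psi (a + s)) ->
  (upper_index psi <= upper_index phi + s%:E)%E.
Proof.
move=> shift; rewrite /upper_index -[X in (X <= _)%E](@subeK _ _ s%:E) //.
apply: leeD2r; apply/ereal_infP => _ [a Ua <-].
rewrite -(@addeK _ s%:E a%:E) //; apply: leeD2r; rewrite -EFinD.
by apply: ereal_inf_lbound; exists (a + s) => //; exact: shift.
Qed.

Lemma lower_index_ge_shift phi psi s :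
  (forall b, lower_exps phi b -> lower_exps psi (b + s)) ->
  (lower_index phi + s%:E <= lower_index psi)%E.
Proof.
move=> shift; rewrite /lower_index -[X in (_ <= X)%E](@subeK _ _ s%:E) //.
apply: leeD2r; apply/ereal_supP => _ [b Lb <-].
rewrite -(@addeK _ s%:E b%:E) //; apply: leeD2r; rewrite -EFinD.
by apply: ereal_sup_ubound; exists (b + s) => //; exact: shift.
Qed.

Definition upper_ratio_transfer phi psi s := forall y0, exists y1,
  forall mu K, 1 <= mu -> 0 <= K ->
  (forall t, y0 <= t -> phi (mu * t) <= K * phi t) ->
  forall y, y1 <= y -> psi (mu * y) <= K * mu `^ s * psi y.

Definition lower_ratio_transfer phi psi s := forall y0, exists y1,
  forall mu K, 1 <= mu -> 0 <= K ->
  (forall t, y0 <= t -> K * phi t <= phi (mu * t)) ->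
  forall y, y1 <= y -> K * mu `^ s * psi y <= psi (mu * y).

Variables (phi psi : R -> R) (s : R).
Hypothesis phi_gt0 : exists z, forall t, z <= t -> 0 < phi t.
Hypothesis psi_gt0 : exists z, forall t, z <= t -> 0 < psi t.

Lemma upper_exps_shift : upper_ratio_transfer phi psi s ->
  forall a, upper_exps phi a -> upper_exps psi (a + s).
Proof.
move=> transfer a [C HC]; have [z phi_z] := phi_gt0; have [z' psi_z'] := psi_gt0.
(* mu = 1 gives 1 <= 2 C, so K := C (1 + eps) mu^a is a nonnegative bound. *)
have C_ge0 : 0 <= C.
  have two_gt1 : (1 : R) < 2 by lra.
  have [x0 Hx0] := HC 2 two_gt1 1 ltr01.
  have phi_pos : 0 < phi (Num.max x0 z) by rewrite phi_z // le_max lexx orbT.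
  have := Hx0 (Num.max x0 z) 1; rewrite le_max lexx mul1r divff ?gt_eqF //.
  rewrite powR1 mulr1 lexx (ltW two_gt1) => /(_ isT isT); lra.
exists C => Lam Lam1 eps eps_gt0.
have [x0 Hx0] := HC Lam Lam1 eps eps_gt0.
have [y1 Hy1] := transfer (Num.max x0 z).
exists (Num.max y1 z') => x mu; rewrite ge_max => /andP[y1x z'x] /andP[mu1 muL].
have mu_gt0 : 0 < mu by exact: lt_le_trans ltr01 mu1.
rewrite ler_pdivrMr; last exact: psi_z'.
rewrite powRD ?(gt_eqF mu_gt0) ?implybT // !mulrA.
apply: Hy1 => //; first by rewrite !mulr_ge0 ?powR_ge0 //; lra.
move=> t; rewrite ge_max => /andP[x0t zt].
by rewrite -ler_pdivrMr ?phi_z //; apply: Hx0; rewrite ?mu1.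
Qed.

Lemma lower_exps_shift : lower_ratio_transfer phi psi s ->
  forall b, lower_exps phi b -> lower_exps psi (b + s).
Proof.
move=> transfer b [D [D_gt0 HD]]; have [z phi_z] := phi_gt0.
have [z' psi_z'] := psi_gt0.
exists D; split => // Lam Lam1 eps eps_gt0.
have [x0 Hx0] := HD Lam Lam1 eps eps_gt0.
have [y1 Hy1] := transfer (Num.max x0 z).
exists (Num.max y1 (Num.max z' 0)) => x mu.
rewrite !ge_max => /andP[y1x /andP[z'x x_ge0]] /andP[mu1 muL].
have mu_gt0 : 0 < mu by exact: lt_le_trans ltr01 mu1.
have psi_x : 0 < psi x by exact: psi_z'.
have psi_mux : 0 < psi (mu * x).
  by apply: psi_z'; rewrite (le_trans z'x) // ler_peMl.
rewrite ler_pdivlMr //.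
rewrite powRD ?(gt_eqF mu_gt0) ?implybT // !mulrA.
have [K_ge0|K_lt0] := leP 0 (D * (1 - eps) * mu `^ b); last first.
  apply: le_trans (ltW psi_mux); apply: mulr_le0_ge0 (ltW psi_x).
  exact: mulr_le0_ge0 (ltW K_lt0) (powR_ge0 _ _).
apply: Hy1 => // t; rewrite ge_max => /andP[x0t zt].
by rewrite -ler_pdivlMr ?phi_z //; apply: Hx0; rewrite ?mu1.
Qed.

End Matuszewska_index_shift.

Section right_endpoint.
Context {R : realType} (F : R -> R).

Lemma right_endpoint_ge y : F y < 1 -> (y%:E <= right_endpoint F)%E.
Proof. by move=> Fy; apply: ereal_sup_ubound; exists y. Qed.

Lemma lt_right_endpoint u :
  (u%:E < right_endpoint F)%E -> exists2 y, u < y & F y < 1.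
Proof.
move=> uE; apply: contrapT => noy; move: uE; apply/negP; rewrite -leNgt.
apply/ereal_supP => _ [y Fy <-]; rewrite lee_fin leNgt; apply/negP => uy.
by apply: noy; exists y.
Qed.

Hypothesis cdfF : is_cdf F.

Lemma cdf_right_endpoint xR : right_endpoint F = xR%:E ->
  forall u, xR <= u -> F u = 1.
Proof.
move=> E; have [_ F01 Frc _ _] := cdfF.
have F_eq1 u : xR < u -> F u = 1.
  move=> xRu; have /andP[_ Fu1] := F01 u; apply/eqP; rewrite eq_le Fu1 /=.
  by rewrite leNgt; apply/negP => /right_endpoint_ge; rewrite E lee_fin leNgt xRu.
move=> u; rewrite le_eqVlt => /orP[/eqP <-|]; last exact: F_eq1.
have F_lim1 : F y @[y --> xR^'+] --> (1 : R).
  by apply: cvg_near_cst; near=> y; apply: F_eq1; near: y; exact: nbhs_right_gt.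
exact: cvg_unique _ (Frc xR) F_lim1.
Unshelve. all: by end_near.
Qed.

End right_endpoint.

(* The contraction t |-> x - (x - t) / m towards x, written as an affine map,
   sends x - 1/s to x - 1/(m s). *)
Lemma contraction_subV {K : fieldType} (x m s : K) : m != 0 -> s != 0 ->
  (x - x / m) + m^-1 * (x - s^-1) = x - (m * s)^-1.
Proof. by move=> m0 s0; field; apply/andP. Qed.

Section tail_integral.
Context {R : realType} (F : R -> R).
Hypotheses (cdfF : is_cdf F) (F0 : F 0 = 0) (meanE_lty : (meanE F < +oo)%E).
Local Notation f := (tailF F).
Local Notation mu := (@lebesgue_measure R).

Lemma tailF_ge0 t : 0 <= f t.
Proof. by have [_ F01 _ _ _] := cdfF; have /andP[_] := F01 t; rewrite subr_ge0. Qed.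

Lemma nonincreasing_tailF : nonincreasing_fun f.
Proof. by have [ndF _ _ _ _] := cdfF; move=> x y xy; rewrite lerB // ndF. Qed.

Lemma measurable_tailF :
  @measurable_fun _ _ (measurableTypeR R) _ [set: R] (fun t => (f t)%:E).
Proof.
by apply/measurable_EFinP; exact: nonincreasing_measurable nonincreasing_tailF.
Qed.

Let tailF_ge0E t : (0 <= (f t)%:E)%E. Proof. by rewrite lee_fin tailF_ge0. Qed.

Lemma tailF_gt0 u : (u%:E < right_endpoint F)%E -> 0 < f u.
Proof.
move=> /lt_right_endpoint[y uy Fy].
by rewrite (lt_le_trans _ (nonincreasing_tailF _ _ (ltW uy))) // subr_gt0.
Qed.

Definition tail_integral (x : R) : \bar R :=
  (\int[mu]_(t in `]x, +oo[) (f t)%:E)%E.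

Lemma meanE_split x : 0 <= x ->
  meanE F = (\int[mu]_(t in `[0%R, x]) (f t)%:E + tail_integral x)%E.
Proof.
move=> x_ge0; rewrite /meanE /tail_integral -ge0_integral_setU //.
- by rewrite -itv_bndbnd_setU.
- exact: measurable_funTS measurable_tailF.
- apply/disj_setPS => t [] /=; rewrite !in_itv /= => /andP[_ tx] /andP[xt _].
  by move: (lt_le_trans xt tx); rewrite ltxx.
Qed.

Lemma fin_num_meanE : meanE F \is a fin_num.
Proof. by rewrite ge0_fin_numE ?meanE_lty // integral_ge0. Qed.

Lemma fin_num_tail_integral x : 0 <= x -> tail_integral x \is a fin_num.
Proof.
move=> x_ge0; have := fin_num_meanE.
by rewrite (meanE_split _ x_ge0) fin_numD => /andP[].
Qed.

Lemma tail_integral_gt0 x : (x%:E < right_endpoint F)%E -> (0 < tail_integral x)%E.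
Proof.
move=> /lt_right_endpoint[y xy Fy].
have fy_gt0 : 0 < f y by rewrite subr_gt0.
apply: (@lt_le_trans _ _ (\int[mu]_(t in `]x, y]) (cst (f y)%:E) t)%E).
  rewrite integral_cst //; change (0 < (f y)%:E * mu `]x, y])%E.
  by rewrite lebesgue_measure_itv /= lte_fin xy -EFinD -EFinM lte_fin
    mulr_gt0 // subr_gt0.
apply: (@le_trans _ _ (\int[mu]_(t in `]x, y]) (f t)%:E)%E).
  apply: ge0_le_integral => //.
  - by move=> t _; rewrite lee_fin ltW.
  - exact: measurable_funTS measurable_tailF.
  - by move=> t /=; rewrite in_itv /= lee_fin => /andP[_]; exact: nonincreasing_tailF.
apply: ge0_subset_integral => //; first exact: measurable_funTS measurable_tailF.
by move=> t /=; rewrite !in_itv /= andbT => /andP[].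
Qed.

Lemma right_endpoint_gt0 : (0 < right_endpoint F)%E.
Proof.
have [_ _ Frc _ _] := cdfF.
have : \forall t \near 0^'+, 0 < t /\ F t < 1.
  near=> t; split; first by near: t; exact: nbhs_right_gt.
  by near: t; apply: (cvgr_lt (F 0) (Frc 0)); rewrite F0.
move=> /filter_ex[w [w_gt0 Fw]].
by rewrite (lt_le_trans _ (right_endpoint_ge _ _ Fw)) ?lte_fin.
Unshelve. all: by end_near.
Qed.

Lemma mean_gt0 : 0 < mean F.
Proof.
rewrite fine_gt0 // meanE_lty andbT.
rewrite (lt_le_trans (tail_integral_gt0 _ right_endpoint_gt0)) //.
by rewrite (meanE_split _ (lexx 0)) leeDr // integral_ge0.
Qed.

Lemma tailG_tail_integral x : 0 <= x -> tailG F x = fine (tail_integral x) / mean F.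
Proof.
move=> x_ge0; have := fin_num_meanE; have := mean_gt0.
rewrite /tailG /Gcdf /mean (meanE_split _ x_ge0) fin_numD.
move=> + /andP[a_fin b_fin]; rewrite fineD // => ab_gt0.
by field; rewrite gt_eqF.
Qed.

Lemma tailG_gt0 x : 0 <= x -> (x%:E < right_endpoint F)%E -> 0 < tailG F x.
Proof.
move=> x_ge0 x_lt; rewrite tailG_tail_integral // divr_gt0 ?mean_gt0 //.
rewrite fine_gt0 // (tail_integral_gt0 _ x_lt) /= -ge0_fin_numE.
  exact: fin_num_tail_integral.
exact: integral_ge0.
Qed.

Lemma tail_integral_affine c k a : 0 < k ->
  tail_integral (c + k * a) =
  (k%:E * \int[mu]_(t in `]a, +oo[) (f (c + k * t))%:E)%E.
Proof.
by move=> k_gt0; apply: ge0_integral_itvy_affine => //; exact: measurable_tailF.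
Qed.

Let measurable_tailF_affine c k :
  @measurable_fun _ _ (measurableTypeR R) _ [set: R] (fun t => (f (c + k * t))%:E).
Proof.
apply/measurable_EFinP; apply: measurableT_comp; last first.
  by apply: measurable_funD => //; exact: measurable_funM.
exact: nonincreasing_measurable nonincreasing_tailF.
Qed.

Let EFin_tailG x : 0 <= x ->
  (tailG F x)%:E = (tail_integral x * (mean F)^-1%:E)%E.
Proof.
by move=> x_ge0; rewrite tailG_tail_integral // EFinM fineK ?fin_num_tail_integral.
Qed.

Lemma tailG_affine_le c k a K : 0 < k -> 0 <= K -> 0 <= a -> 0 <= c + k * a ->
  (forall t, a < t -> f (c + k * t) <= K * f t) ->
  tailG F (c + k * a) <= k * K * tailG F a.
Proof.
move=> k_gt0 K_ge0 a_ge0 ca_ge0 fK.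
rewrite -lee_fin EFinM !EFin_tailG // muleA.
apply: lee_wpmul2r; first by rewrite lee_fin invr_ge0 ltW // mean_gt0.
rewrite tail_integral_affine // EFinM -muleA.
apply: lee_wpmul2l; first by rewrite lee_fin ltW.
rewrite /tail_integral -ge0_integralZl_EFin //; last first.
  exact: measurable_funTS measurable_tailF.
apply: ge0_le_integral => //.
- exact: measurable_funTS (measurable_tailF_affine c k).
- by apply: measurable_funeM; exact: measurable_funTS measurable_tailF.
- by move=> t; rewrite /= in_itv /= andbT => at_; rewrite -EFinM lee_fin fK.
Qed.

Lemma tailG_affine_ge c k a K : 0 < k -> 0 <= K -> 0 <= a -> 0 <= c + k * a ->
  (forall t, a < t -> K * f t <= f (c + k * t)) ->
  k * K * tailG F a <= tailG F (c + k * a).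
Proof.
move=> k_gt0 K_ge0 a_ge0 ca_ge0 fK.
rewrite -lee_fin EFinM !EFin_tailG // muleA.
apply: lee_wpmul2r; first by rewrite lee_fin invr_ge0 ltW // mean_gt0.
rewrite tail_integral_affine // EFinM -muleA.
apply: lee_wpmul2l; first by rewrite lee_fin ltW.
rewrite /tail_integral -ge0_integralZl_EFin //; last first.
  exact: measurable_funTS measurable_tailF.
apply: ge0_le_integral => //.
- by move=> t _; rewrite -EFinM lee_fin mulr_ge0 // tailF_ge0.
- by apply: measurable_funeM; exact: measurable_funTS measurable_tailF.
- exact: measurable_funTS (measurable_tailF_affine c k).
- by move=> t; rewrite /= in_itv /= andbT => at_; rewrite -EFinM lee_fin fK.
Qed.

Lemma upper_ratio_transfer_tailG : upper_ratio_transfer f (tailG F) 1.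
Proof.
move=> y0; exists (Num.max y0 0) => mu K mu1 K_ge0 fK y.
rewrite ge_max => /andP[y0y y_ge0]; have mu_gt0 : 0 < mu := lt_le_trans ltr01 mu1.
rewrite (powRr1 (ltW mu_gt0)) [K * mu]mulrC -[mu * y]add0r.
apply: tailG_affine_le => //; first by rewrite add0r mulr_ge0 // ltW.
by move=> t yt; rewrite add0r fK // (le_trans y0y) // ltW.
Qed.

Lemma lower_ratio_transfer_tailG : lower_ratio_transfer f (tailG F) 1.
Proof.
move=> y0; exists (Num.max y0 0) => mu K mu1 K_ge0 fK y.
rewrite ge_max => /andP[y0y y_ge0]; have mu_gt0 : 0 < mu := lt_le_trans ltr01 mu1.
rewrite (powRr1 (ltW mu_gt0)) [K * mu]mulrC -[mu * y]add0r.
apply: tailG_affine_ge => //; first by rewrite add0r mulr_ge0 // ltW.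
by move=> t yt; rewrite add0r fK // (le_trans y0y) // ltW.
Qed.

Lemma tailF_eq0 xR u : right_endpoint F = xR%:E -> xR <= u -> f u = 0.
Proof. by move=> E xRu; rewrite /tailF (cdf_right_endpoint _ cdfF _ E) ?subrr. Qed.

Lemma near_endpoint_tailF_gt0 xR t : right_endpoint F = xR%:E -> 0 < t ->
  0 < near_endpoint f xR t.
Proof. by move=> E t_gt0; apply: tailF_gt0; rewrite E lte_fin gtrBl invr_gt0. Qed.

Lemma near_endpoint_tailG_gt0 xR t : right_endpoint F = xR%:E -> xR^-1 <= t ->
  0 < near_endpoint (tailG F) xR t.
Proof.
move=> E xRt; have xR_gt0 : 0 < xR by rewrite -lte_fin -E right_endpoint_gt0.
have t_gt0 : 0 < t by rewrite (lt_le_trans _ xRt) ?invr_gt0.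
apply: tailG_gt0; first by rewrite subr_ge0 -[xR]invrK lef_pV2 ?posrE ?invr_gt0.
by rewrite E lte_fin gtrBl invr_gt0.
Qed.

Let tailF_contraction_le xR mu K y : right_endpoint F = xR%:E ->
  0 < mu -> 0 < y -> 0 <= K ->
  (forall s, y <= s -> near_endpoint f xR (mu * s) <= K * near_endpoint f xR s) ->
  forall t, xR - y^-1 < t -> f ((xR - xR / mu) + mu^-1 * t) <= K * f t.
Proof.
move=> E mu_gt0 y_gt0 K_ge0 phiK t yt; have [t_lt|t_ge] := ltP t xR; last first.
  rewrite (tailF_eq0 _ _ E) ?mulr_ge0 ?tailF_ge0 // -subr_ge0.
  rewrite (_ : _ - xR = (t - xR) / mu) ?divr_ge0 ?subr_ge0 ?(ltW mu_gt0) //.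
  by field; rewrite gt_eqF.
have [s ys ->] : exists2 s, y <= s & t = xR - s^-1.
  exists (xR - t)^-1; last by rewrite invrK; ring.
  rewrite -[y]invrK lef_pV2 ?posrE ?invr_gt0 ?subr_gt0 //; lra.
rewrite contraction_subV ?gt_eqF ?(lt_le_trans y_gt0 ys) //; exact: phiK.
Qed.

Let tailF_contraction_ge xR mu K y : right_endpoint F = xR%:E ->
  0 < mu -> 0 < y -> 0 <= K ->
  (forall s, y <= s -> K * near_endpoint f xR s <= near_endpoint f xR (mu * s)) ->
  forall t, xR - y^-1 < t -> K * f t <= f ((xR - xR / mu) + mu^-1 * t).
Proof.
move=> E mu_gt0 y_gt0 K_ge0 phiK t yt; have [t_lt|t_ge] := ltP t xR; last first.
  by rewrite (tailF_eq0 _ _ E t_ge) mulr0 tailF_ge0.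
have [s ys ->] : exists2 s, y <= s & t = xR - s^-1.
  exists (xR - t)^-1; last by rewrite invrK; ring.
  rewrite -[y]invrK lef_pV2 ?posrE ?invr_gt0 ?subr_gt0 //; lra.
rewrite contraction_subV ?gt_eqF ?(lt_le_trans y_gt0 ys) //; exact: phiK.
Qed.

Lemma upper_ratio_transfer_near_endpoint xR : right_endpoint F = xR%:E ->
  upper_ratio_transfer (near_endpoint f xR) (near_endpoint (tailG F) xR) (-1).
Proof.
move=> E y0; have xR_gt0 : 0 < xR by rewrite -lte_fin -E right_endpoint_gt0.
exists (Num.max y0 xR^-1) => mu K mu1 K_ge0 phiK y.
rewrite ge_max => /andP[y0y xRy]; have mu_gt0 : 0 < mu := lt_le_trans ltr01 mu1.
have y_gt0 : 0 < y by rewrite (lt_le_trans _ xRy) ?invr_gt0.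
have yV_le : y^-1 <= xR by rewrite -[xR]invrK lef_pV2 ?posrE ?invr_gt0.
rewrite /near_endpoint powRN (powRr1 (ltW mu_gt0)) [K * _]mulrC.
rewrite -contraction_subV ?gt_eqF //; apply: tailG_affine_le => //.
- by rewrite invr_gt0.
- by rewrite subr_ge0.
- rewrite contraction_subV ?gt_eqF // subr_ge0 (le_trans _ yV_le) //.
  by rewrite lef_pV2 ?posrE ?mulr_gt0 // ler_peMl // ltW.
- by apply: tailF_contraction_le => // s ys; rewrite phiK // (le_trans y0y).
Qed.

Lemma lower_ratio_transfer_near_endpoint xR : right_endpoint F = xR%:E ->
  lower_ratio_transfer (near_endpoint f xR) (near_endpoint (tailG F) xR) (-1).
Proof.
move=> E y0; have xR_gt0 : 0 < xR by rewrite -lte_fin -E right_endpoint_gt0.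
exists (Num.max y0 xR^-1) => mu K mu1 K_ge0 phiK y.
rewrite ge_max => /andP[y0y xRy]; have mu_gt0 : 0 < mu := lt_le_trans ltr01 mu1.
have y_gt0 : 0 < y by rewrite (lt_le_trans _ xRy) ?invr_gt0.
have yV_le : y^-1 <= xR by rewrite -[xR]invrK lef_pV2 ?posrE ?invr_gt0.
rewrite /near_endpoint powRN (powRr1 (ltW mu_gt0)) [K * _]mulrC.
rewrite -contraction_subV ?gt_eqF //; apply: tailG_affine_ge => //.
- by rewrite invr_gt0.
- by rewrite subr_ge0.
- rewrite contraction_subV ?gt_eqF // subr_ge0 (le_trans _ yV_le) //.
  by rewrite lef_pV2 ?posrE ?mulr_gt0 // ler_peMl // ltW.
- by apply: tailF_contraction_ge => // s ys; rewrite phiK // (le_trans y0y).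
Qed.

End tail_integral.

Theorem lemma7 (R : realType) (F : R -> R) :
  is_cdf F -> F 0 = 0 -> (meanE F < +oo)%E ->
  (right_endpoint F = +oo%E ->
     (upper_index (tailG F) <= upper_index (tailF F) + 1%:E)%E /\
     (lower_index (tailF F) + 1%:E <= lower_index (tailG F))%E) /\
  (forall xR : R, right_endpoint F = xR%:E ->
     (upper_index (near_endpoint (tailG F) xR)
        <= upper_index (near_endpoint (tailF F) xR) - 1%:E)%E /\
     (lower_index (near_endpoint (tailF F) xR) - 1%:E
        <= lower_index (near_endpoint (tailG F) xR))%E).
Proof.
move=> cdfF F0 meanE_lty; split => [E | xR E].
  have tailF_pos : exists z, forall t, z <= t -> 0 < tailF F t.
    by exists 0 => t _; apply: (tailF_gt0 _ cdfF); rewrite E ltey.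
  have tailG_pos : exists z, forall t, z <= t -> 0 < tailG F t.
    by exists 0 => t t_ge0; apply: (tailG_gt0 _ cdfF F0 meanE_lty); rewrite ?E ?ltey.
  split; [apply: upper_index_le_shift; apply: upper_exps_shift |
          apply: lower_index_ge_shift; apply: lower_exps_shift] => //.
  - exact: upper_ratio_transfer_tailG.
  - exact: lower_ratio_transfer_tailG.
have tailF_pos : exists z, forall t, z <= t -> 0 < near_endpoint (tailF F) xR t.
  by exists 1 => t t_ge1; rewrite (near_endpoint_tailF_gt0 _ cdfF) ?(lt_le_trans ltr01).
have tailG_pos : exists z, forall t, z <= t -> 0 < near_endpoint (tailG F) xR t.
  by exists xR^-1 => t; exact: near_endpoint_tailG_gt0.
rewrite -EFinN; split; [apply: upper_index_le_shift; apply: upper_exps_shift |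
  apply: lower_index_ge_shift; apply: lower_exps_shift] => //.
- exact: upper_ratio_transfer_near_endpoint.
- exact: lower_ratio_transfer_near_endpoint.
Qed.
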